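(* Let $A\in\mathbb{R}_+^{n\times n}$ be a nonzero circulant matrix and $M=(A/\lambda(A))^{n^2}$ (max-algebraic power). Then $M$ is a Kleene star: $M\otimes M=M$ and $M_{i,i}=1$ for all $i$, equivalently $M=M^*:=I\oplus M\oplus M^2\oplus\dots\oplus M^{n-1}$.
   Context: Max algebra on $\mathbb{R}_+$ with $\oplus=\max$ and ordinary product; $A^t$ is the max-algebraic power and $I$ the identity matrix. A circulant matrix has $A_{i,j}=a_t$ with $t\equiv j-i\pmod n$, $t\in\{0,\dots,n-1\}$. $\lambda(A)$ is the greatest max-algebraic eigenvalue, i.e. the maximum cycle geometric mean; it is nonzero for nonzero circulant $A$. *)

(* real numbers from Stdlib Reals; matrices of size n are
   functions nat -> nat -> R, only entries with indices < n are meaningful. *)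
From Stdlib Require Import Reals List Arith.
Import ListNotations.
Open Scope R_scope.

(* iterated max over k < m of f k, with neutral element 0 (entries are >= 0) *)
Fixpoint bigmax (m : nat) (f : nat -> R) : R :=
  match m with
  | O => 0
  | S m' => Rmax (bigmax m' f) (f m')
  end.

Fixpoint bigprod (m : nat) (f : nat -> R) : R :=
  match m with
  | O => 1
  | S m' => bigprod m' f * f m'
  end.

Definition mat := nat -> nat -> R.

Definition mid : mat := fun i j => if Nat.eqb i j then 1 else 0.

Definition mmul (n : nat) (A B : mat) : mat :=
  fun i j => bigmax n (fun k => A i k * B k j).

Definition madd (A B : mat) : mat := fun i j => Rmax (A i j) (B i j).

Fixpoint mpow (n : nat) (A : mat) (t : nat) : mat :=
  match t with
  | O => mid
  | S t' => mmul n (mpow n A t') A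
  end.

Definition mscale (c : R) (A : mat) : mat := fun i j => c * A i j.

Definition mstar (n : nat) (M : mat) : mat :=
  fun i j => bigmax n (fun t => mpow n M t i j).

(* circulant matrix with first row a_0,...,a_{n-1}: A_{i,j} = a_t, t = (j-i) mod n *)
Definition circulant (n : nat) (a : nat -> R) : mat :=
  fun i j => a ((j + n - i) mod n)%nat.

(* elementary cycles: nonempty duplicate-free lists of indices < n;
   the cycle is i_0 -> i_1 -> ... -> i_{k-1} -> i_0 *)
Definition is_cycle (n : nat) (c : list nat) : Prop :=
  c <> [] /\ NoDup c /\ (forall i, In i c -> (i < n)%nat).

Definition cycle_weight (A : mat) (c : list nat) : R :=
  let k := length c in
  bigprod k (fun m => A (nth m c O) (nth ((m + 1) mod k) c O)).

(* geometric mean w^(1/k) of a nonnegative weight w (0 if w = 0) *)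
Definition gmean (w : R) (k : nat) : R :=
  if Req_EM_T w 0 then 0 else Rpower w (/ INR k).

Definition cycle_gmean (A : mat) (c : list nat) : R :=
  gmean (cycle_weight A c) (length c).

Definition is_lambda (n : nat) (A : mat) (l : R) : Prop :=
  (exists c, is_cycle n c /\ cycle_gmean A c = l) /\
  (forall c, is_cycle n c -> cycle_gmean A c <= l).

From Stdlib Require Import Reals List Arith Lia Lra Permutation Wf_nat.
Import ListNotations.
Open Scope R_scope.

(* For a circulant matrix, (A^t)_(i,j) is the largest weight a_(x_1) ... a_(x_t) of a word of
   steps x_1 ... x_t with i + x_1 + ... + x_t = j (mod n).  lambda(A) is the largest entry a_s:
   no cycle mean exceeds it, and the orbit of s in Z/nZ is an elementary cycle attaining it.
   After dividing by a_s all letters weigh at most 1 and s weighs 1, so the word s^(n^2) gives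
   unit diagonal entries.  A word of length 2n^2 contains some letter at least n times; deleting
   n copies of it keeps the endpoint modulo n and cannot lower the weight, so walks of length
   2n^2 are dominated by walks of length n^2, i.e. M (x) M = M.  An idempotent matrix with unit
   diagonal is its own Kleene star. *)


Lemma circulant_index_step n k j :
  (k < n)%nat -> (j < n)%nat -> ((k + (j + n - k) mod n) mod n = j)%nat.
Proof.
  intros Hk Hj. rewrite Nat.Div0.add_mod_idemp_r.
  replace (k + (j + n - k))%nat with (j + 1 * n)%nat by lia.
  rewrite Nat.Div0.mod_add. apply Nat.mod_small; lia.
Qed.

Lemma circulant_index_add n k x :
  (k < n)%nat -> (x < n)%nat -> (((k + x) mod n + n - k) mod n = x)%nat.
Proof.
  intros Hk Hx. destruct (Nat.lt_ge_cases (k + x) n).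
  - rewrite (Nat.mod_small (k + x)) by lia.
    replace (k + x + n - k)%nat with (x + 1 * n)%nat by lia.
    rewrite Nat.Div0.mod_add. apply Nat.mod_small; lia.
  - replace (k + x)%nat with ((k + x - n) + 1 * n)%nat by lia.
    rewrite Nat.Div0.mod_add, (Nat.mod_small (k + x - n)) by lia.
    replace (k + x - n + n - k)%nat with x by lia. apply Nat.mod_small; lia.
Qed.

Lemma bigmax_nonneg m f : 0 <= bigmax m f.
Proof. induction m; simpl; [lra | eapply Rle_trans; [exact IHm | apply Rmax_l]]. Qed.

Lemma le_bigmax m f k : (k < m)%nat -> f k <= bigmax m f.
Proof.
  induction m; intros Hk; simpl; [lia |].
  destruct (Nat.eq_dec k m) as [-> | Hkm]; [apply Rmax_r |].
  eapply Rle_trans; [apply IHm; lia | apply Rmax_l].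
Qed.

Lemma bigmax_lub m f c :
  0 <= c -> (forall k, (k < m)%nat -> f k <= c) -> bigmax m f <= c.
Proof.
  induction m; simpl; intros Hc Hf; [lra |].
  apply Rmax_lub; [apply IHm | apply Hf]; auto.
Qed.

Lemma bigmax_attained m f :
  bigmax m f = 0 \/ exists k, (k < m)%nat /\ bigmax m f = f k.
Proof.
  induction m; simpl; [now left |].
  unfold Rmax; destruct (Rle_dec (bigmax m f) (f m)); [right; exists m; auto |].
  destruct IHm as [H | [k [Hk H]]]; [left | right; exists k; split; [lia |]]; auto.
Qed.

Lemma bigmax_ext m f g : (forall k, (k < m)%nat -> f k = g k) -> bigmax m f = bigmax m g.
Proof. induction m; simpl; intros H; auto. rewrite IHm, H; auto. Qed.

Lemma bigprod_bounds k f c :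
  (forall m, (m < k)%nat -> 0 <= f m <= c) -> 0 <= bigprod k f <= c ^ k.
Proof.
  induction k; intros H; simpl; [lra |].
  specialize (IHk ltac:(intros; apply H; lia)). specialize (H k ltac:(lia)).
  split; nra.
Qed.

Lemma bigprod_const k f x : (forall m, (m < k)%nat -> f m = x) -> bigprod k f = x ^ k.
Proof.
  induction k; intros H; simpl; auto.
  rewrite IHk by (intros; apply H; lia). rewrite H by lia. ring.
Qed.

Lemma mid_nonneg i j : 0 <= mid i j.
Proof. unfold mid; destruct Nat.eqb; lra. Qed.

Lemma mpow_nonneg n A t i j : 0 <= mpow n A t i j.
Proof. destruct t; simpl; [apply mid_nonneg | apply bigmax_nonneg]. Qed.

Lemma mmul_mid_l n (M : mat) i j :
  (i < n)%nat -> (forall k, 0 <= M k j) -> mmul n mid M i j = M i j.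
Proof.
  intros Hi HM. unfold mmul. apply Rle_antisym.
  - apply bigmax_lub; auto. intros k Hk. unfold mid.
    destruct (Nat.eqb_spec i k); subst; [lra | rewrite Rmult_0_l; auto].
  - eapply Rle_trans; [| apply (le_bigmax _ _ i Hi)].
    unfold mid; rewrite Nat.eqb_refl; lra.
Qed.

Section KleeneStar.

Variables (n : nat) (M : mat).
Hypothesis M_nonneg : forall i j, 0 <= M i j.
Hypothesis M_idem : forall i j, (i < n)%nat -> (j < n)%nat -> mmul n M M i j = M i j.
Hypothesis M_diag : forall i, (i < n)%nat -> M i i = 1.

Lemma mpow_idempotent t i j :
  (1 <= t)%nat -> (i < n)%nat -> (j < n)%nat -> mpow n M t i j = M i j.
Proof.
  revert i j. induction t as [| t IH]; intros i j Ht Hi Hj; [lia |]. simpl.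
  destruct t as [| t]; [apply mmul_mid_l; auto |].
  rewrite <- (M_idem i j Hi Hj). unfold mmul.
  apply bigmax_ext. intros k Hk. rewrite IH; auto. lia.
Qed.

Lemma idempotent_eq_mstar i j : (i < n)%nat -> (j < n)%nat -> M i j = mstar n M i j.
Proof.
  intros Hi Hj. unfold mstar. apply Rle_antisym.
  - destruct (Nat.eq_dec i j) as [<- | Hij].
    + eapply Rle_trans; [| apply (le_bigmax n _ 0%nat ltac:(lia))].
      simpl; unfold mid; rewrite Nat.eqb_refl, M_diag; auto; lra.
    + eapply Rle_trans; [| apply (le_bigmax n _ 1%nat ltac:(lia))].
      cbv beta; rewrite mpow_idempotent; auto; lra.
  - apply bigmax_lub; [apply M_nonneg |]. intros [| t] Ht.
    + simpl; unfold mid. destruct (Nat.eqb_spec i j) as [<- | _].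
      * rewrite M_diag; auto; lra.
      * apply M_nonneg.
    + rewrite mpow_idempotent by (auto; lia). lra.
Qed.

End KleeneStar.

Fixpoint word_weight (b : nat -> R) (w : list nat) : R :=
  match w with [] => 1 | x :: w' => b x * word_weight b w' end.

Definition letters_below (n : nat) (w : list nat) : Prop := Forall (fun x => (x < n)%nat) w.

Lemma word_weight_app b w1 w2 : word_weight b (w1 ++ w2) = word_weight b w1 * word_weight b w2.
Proof. induction w1; simpl; [ring | rewrite IHw1; ring]. Qed.

Lemma word_weight_repeat b v c : word_weight b (repeat v c) = b v ^ c.
Proof. induction c; simpl; [| rewrite IHc]; auto. Qed.

Lemma word_weight_perm b w1 w2 : Permutation w1 w2 -> word_weight b w1 = word_weight b w2.
Proof. induction 1; simpl; congruence || ring. Qed.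

Lemma word_weight_bounds n b w :
  (forall x, (x < n)%nat -> 0 <= b x <= 1) -> letters_below n w -> 0 <= word_weight b w <= 1.
Proof. intros Hb Hw; induction Hw as [| x w Hx]; simpl; [lra |]. specialize (Hb x Hx). nra. Qed.

Lemma list_sum_repeat v c : list_sum (repeat v c) = (c * v)%nat.
Proof. induction c; simpl; lia. Qed.

Section CirculantWalks.

Variables (n : nat) (b : nat -> R).
Hypothesis n_pos : (0 < n)%nat.
Hypothesis b_nonneg : forall x, (x < n)%nat -> 0 <= b x.

Lemma word_weight_le_mpow_circulant w i :
  letters_below n w -> (i < n)%nat ->
  word_weight b w <= mpow n (circulant n b) (length w) i ((i + list_sum w) mod n).
Proof.
  revert i; induction w as [| x w IH]; intros i Hw Hi; simpl.
  - rewrite Nat.add_0_r, Nat.mod_small by lia. unfold mid. rewrite Nat.eqb_refl. lra.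
  - inversion Hw as [| ? ? Hx Hw']; subst. unfold mmul.
    set (k := ((i + list_sum w) mod n)%nat).
    assert (Hk : (k < n)%nat) by (apply Nat.mod_upper_bound; lia).
    eapply Rle_trans; [| apply (le_bigmax _ _ k Hk)]; cbv beta.
    replace ((i + (x + list_sum w)) mod n)%nat with ((k + x) mod n)%nat
      by (unfold k; rewrite Nat.Div0.add_mod_idemp_l; f_equal; lia).
    unfold circulant at 2. rewrite circulant_index_add by auto.
    rewrite Rmult_comm. apply Rmult_le_compat_r; auto.
Qed.

Lemma mpow_circulant_le_word_weight L i j :
  (i < n)%nat -> (j < n)%nat ->
  mpow n (circulant n b) L i j = 0 \/
  exists w, length w = L /\ letters_below n w /\ ((i + list_sum w) mod n = j)%nat /\
    mpow n (circulant n b) L i j <= word_weight b w.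
Proof.
  revert j; induction L as [| L IH]; intros j Hi Hj; simpl.
  - unfold mid. destruct (Nat.eqb_spec i j) as [<- | _]; [right | now left].
    exists []; simpl; repeat split; [constructor | rewrite Nat.add_0_r; apply Nat.mod_small; lia | lra].
  - unfold mmul.
    destruct (bigmax_attained n (fun k => mpow n (circulant n b) L i k * circulant n b k j))
      as [H | [k [Hk ->]]]; [now left |].
    destruct (IH k Hi Hk) as [H0 | [w [Hl [Hw [Hs Hle]]]]]; [left; rewrite H0; ring |].
    right. exists (((j + n - k) mod n)%nat :: w). simpl; repeat split.
    + lia.
    + constructor; auto. apply Nat.mod_upper_bound; lia.
    + replace (i + ((j + n - k) mod n + list_sum w))%nat
        with ((i + list_sum w) + (j + n - k) mod n)%nat by lia.
      rewrite <- Nat.Div0.add_mod_idemp_l, Hs. apply circulant_index_step; auto.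
    + unfold circulant. rewrite Rmult_comm.
      apply Rmult_le_compat_l; [apply b_nonneg, Nat.mod_upper_bound; lia | exact Hle].
Qed.

End CirculantWalks.

Lemma length_count_occ_remove v w :
  length w = (count_occ Nat.eq_dec w v + length (remove Nat.eq_dec v w))%nat.
Proof.
  induction w as [| x w IH]; simpl; auto.
  destruct (Nat.eq_dec v x), (Nat.eq_dec x v); subst; simpl; try lia; congruence.
Qed.

Lemma count_occ_remove_le u v w :
  (count_occ Nat.eq_dec (remove Nat.eq_dec v w) u <= count_occ Nat.eq_dec w u)%nat.
Proof.
  induction w as [| x w IH]; simpl; auto.
  destruct (Nat.eq_dec v x); simpl; destruct (Nat.eq_dec x u); lia.
Qed.

Lemma exists_frequent_letter m k w :
  letters_below m w -> (m * k < length w)%nat ->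
  exists v, (v < m)%nat /\ (k < count_occ Nat.eq_dec w v)%nat.
Proof.
  revert w; induction m as [| m IH]; intros w Hw Hlen.
  - destruct Hw; simpl in *; lia.
  - destruct (le_gt_dec (count_occ Nat.eq_dec w m) k) as [Hm | Hm]; [| exists m; split; lia].
    destruct (IH (remove Nat.eq_dec m w)) as [v [Hv Hcount]].
    + unfold letters_below in *. rewrite Forall_forall in *.
      intros x Hx. apply in_remove in Hx as [Hx Hxm].
      specialize (Hw x Hx). lia.
    + rewrite (length_count_occ_remove m w) in Hlen. lia.
    + exists v. split; [lia |]. pose proof (count_occ_remove_le v m w). lia.
Qed.

Lemma perm_repeat_app_of_count_occ c v w :
  (c <= count_occ Nat.eq_dec w v)%nat -> exists w', Permutation w (repeat v c ++ w').
Proof.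
  revert w; induction c as [| c IH]; intros w Hc; [now exists w |].
  assert (Hv : In v w) by (apply (count_occ_In Nat.eq_dec); lia).
  destruct (in_split _ _ Hv) as [w1 [w2 ->]].
  rewrite count_occ_elt_eq in Hc by auto.
  destruct (IH (w1 ++ w2)) as [w' Hw']; [lia |].
  exists w'. simpl. eapply perm_trans; [apply Permutation_sym, Permutation_middle |].
  now apply perm_skip.
Qed.

Section WordShortening.

Variables (n : nat) (b : nat -> R).
Hypothesis n_pos : (0 < n)%nat.
Hypothesis b_unit : forall x, (x < n)%nat -> 0 <= b x <= 1.

(* Deleting n copies of a letter v shifts the sum by n * v and removes the factor b v ^ n <= 1. *)
Lemma word_shorten_step w :
  letters_below n w -> (n * (n - 1) < length w)%nat ->
  exists w', (length w' + n = length w)%nat /\ letters_below n w' /\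
    (list_sum w' mod n = list_sum w mod n)%nat /\ word_weight b w <= word_weight b w'.
Proof.
  intros Hw Hlen.
  destruct (exists_frequent_letter n (n - 1) w Hw Hlen) as [v [Hv Hcount]].
  destruct (perm_repeat_app_of_count_occ n v w ltac:(lia)) as [w' Hperm].
  assert (Hw' : letters_below n w').
  { unfold letters_below in *. rewrite Forall_forall in *. intros x Hx. apply Hw.
    apply (Permutation_in _ (Permutation_sym Hperm)), in_or_app; auto. }
  exists w'. repeat split; auto.
  - apply Permutation_length in Hperm. rewrite length_app, repeat_length in Hperm. lia.
  - rewrite (Permutation_list_sum Hperm), list_sum_app, list_sum_repeat.
    rewrite Nat.add_comm, Nat.mul_comm. symmetry; apply Nat.Div0.mod_add.
  - rewrite (word_weight_perm b _ _ Hperm), word_weight_app, word_weight_repeat.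
    pose proof (word_weight_bounds n b w' b_unit Hw').
    pose proof (b_unit v Hv) as Hbv. pose proof (pow_le (b v) n ltac:(lra)).
    pose proof (pow_incr (b v) 1 n Hbv) as Hpow. rewrite pow1 in Hpow. nra.
Qed.

Lemma word_shorten L m w :
  letters_below n w -> (n * (n - 1) <= L)%nat -> length w = (L + m * n)%nat ->
  exists w', length w' = L /\ letters_below n w' /\
    (list_sum w' mod n = list_sum w mod n)%nat /\ word_weight b w <= word_weight b w'.
Proof.
  revert w; induction m as [| m IH]; intros w Hw HL Hlen.
  - exists w. repeat split; auto; [lia | lra].
  - destruct (word_shorten_step w Hw ltac:(nia)) as [w1 [Hl1 [Hw1 [Hs1 Hp1]]]].
    destruct (IH w1 Hw1 HL ltac:(lia)) as [w2 [Hl2 [Hw2 [Hs2 Hp2]]]].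
    exists w2. repeat split; auto; [congruence | lra].
Qed.

End WordShortening.

Lemma exists_argmax (a : nat -> R) n :
  (0 < n)%nat -> exists s, (s < n)%nat /\ forall t, (t < n)%nat -> a t <= a s.
Proof.
  induction n as [| n IH]; intros Hn; [lia |].
  destruct (Nat.eq_dec n 0) as [-> | Hn0].
  - exists 0%nat. split; [lia |]. intros t Ht. replace t with 0%nat by lia. lra.
  - destruct IH as [s [Hs Hmax]]; [lia |].
    destruct (Rle_dec (a n) (a s)).
    + exists s. split; [lia |]. intros t Ht.
      destruct (Nat.eq_dec t n) as [-> | ]; auto. apply Hmax; lia.
    + exists n. split; [lia |]. intros t Ht.
      destruct (Nat.eq_dec t n) as [-> | ]; [lra |]. specialize (Hmax t ltac:(lia)). lra.
Qed.

Lemma Rpower_pow_inv x k : 0 < x -> (0 < k)%nat -> Rpower (x ^ k) (/ INR k) = x.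
Proof.
  intros Hx Hk. rewrite <- Rpower_pow, Rpower_mult, Rinv_r by (auto; apply not_0_INR; lia).
  apply Rpower_1; auto.
Qed.

Lemma cycle_gmean_circulant_le n a s c :
  (forall t, (t < n)%nat -> 0 <= a t <= a s) -> 0 < a s ->
  is_cycle n c -> cycle_gmean (circulant n a) c <= a s.
Proof.
  intros Ha Has [Hne [_ Hc]]. unfold cycle_gmean, gmean, cycle_weight.
  assert (Hn : (0 < n)%nat) by (destruct c as [| x c]; [congruence | specialize (Hc x (or_introl eq_refl)); lia]).
  set (k := length c). assert (Hk : (0 < k)%nat) by (unfold k; destruct c; simpl; [congruence | lia]).
  set (w := bigprod k _).
  assert (Hw : 0 <= w <= a s ^ k).
  { apply bigprod_bounds. intros m Hm. unfold circulant. apply Ha, Nat.mod_upper_bound. lia. }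
  destruct (Req_EM_T w 0); [lra |].
  rewrite <- (Rpower_pow_inv (a s) k) by auto.
  apply Rle_Rpower_l; [left; apply Rinv_0_lt_compat, lt_0_INR; auto | lra].
Qed.

Lemma exists_additive_order n s :
  (0 < n)%nat -> exists k, (0 < k)%nat /\ ((k * s) mod n = 0)%nat /\
    forall j, (0 < j < k)%nat -> ((j * s) mod n <> 0)%nat.
Proof.
  intros Hn.
  destruct (dec_inh_nat_subset_has_unique_least_element
              (fun j => (0 < j)%nat /\ ((j * s) mod n = 0)%nat)) as [k [[[Hk Hks] Hleast] _]].
  - intros j. destruct (Nat.eq_dec ((j * s) mod n) 0), (Nat.eq_dec j 0); [right | left | right | right]; lia.
  - exists n. split; auto. rewrite Nat.mul_comm. apply Nat.Div0.mod_mul.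
  - exists k. repeat split; auto. intros j Hj Hjs. specialize (Hleast j ltac:(split; lia)). lia.
Qed.

Lemma mod_sub_eq_0 n i j t :
  (0 < n)%nat -> (i < j)%nat -> ((i * t) mod n = (j * t) mod n)%nat -> (((j - i) * t) mod n = 0)%nat.
Proof.
  intros Hn Hij Heq.
  pose proof (Nat.div_mod (i * t) n ltac:(lia)). pose proof (Nat.div_mod (j * t) n ltac:(lia)).
  rewrite Nat.mul_sub_distr_r.
  replace (j * t - i * t)%nat with ((j * t / n - i * t / n) * n)%nat by nia.
  apply Nat.Div0.mod_mul.
Qed.

(* The orbit 0, s, 2s, ... of s in Z/nZ is an elementary cycle all of whose arcs have weight a s. *)
Lemma exists_cycle_circulant_gmean n a s :
  (s < n)%nat -> 0 < a s -> exists c, is_cycle n c /\ cycle_gmean (circulant n a) c = a s.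
Proof.
  intros Hs Has.
  destruct (exists_additive_order n s ltac:(lia)) as [k [Hk [Hks Hmin]]].
  set (c := map (fun m => ((m * s) mod n)%nat) (seq 0 k)).
  assert (Hlen : length c = k) by (unfold c; rewrite length_map, length_seq; auto).
  assert (Hnth : forall m, (m < k)%nat -> nth m c 0%nat = ((m * s) mod n)%nat).
  { intros m Hm. rewrite (nth_indep c 0%nat ((fun m => ((m * s) mod n)%nat) 0%nat)) by lia.
    unfold c. rewrite (map_nth (fun m => ((m * s) mod n)%nat)), seq_nth; auto. }
  exists c. split; [split; [| split] |].
  - intros E. rewrite E in Hlen. simpl in Hlen. lia.
  - apply (NoDup_nth c 0%nat). rewrite Hlen. intros i j Hi Hj E. rewrite !Hnth in E by auto.
    destruct (Nat.lt_trichotomy i j) as [H | [H | H]]; auto; exfalso.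
    + apply (Hmin (j - i)%nat); [lia | apply mod_sub_eq_0; auto; lia].
    + apply (Hmin (i - j)%nat); [lia | apply mod_sub_eq_0; auto; lia].
  - intros i Hi. unfold c in Hi. apply in_map_iff in Hi as [m [<- _]]. apply Nat.mod_upper_bound; lia.
  - unfold cycle_gmean, gmean, cycle_weight. rewrite Hlen, (bigprod_const k _ (a s)).
    + destruct (Req_EM_T (a s ^ k) 0) as [E | _]; [| apply Rpower_pow_inv; auto].
      exfalso. apply (pow_nonzero (a s) k); lra.
    + intros m Hm. assert (Hm1 : ((m + 1) mod k < k)%nat) by (apply Nat.mod_upper_bound; lia).
      rewrite !Hnth by auto. unfold circulant. f_equal.
      replace (((m + 1) mod k * s) mod n)%nat with (((m * s) mod n + s) mod n)%nat.
      * apply circulant_index_add; auto. apply Nat.mod_upper_bound; lia.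
      * rewrite Nat.Div0.add_mod_idemp_l.
        destruct (Nat.eq_dec (m + 1) k) as [E | E].
        -- replace (m * s + s)%nat with (k * s)%nat by nia.
           rewrite Hks, E, Nat.Div0.mod_same. symmetry; apply Nat.Div0.mod_0_l.
        -- rewrite (Nat.mod_small (m + 1) k) by lia. f_equal. lia.
Qed.

Lemma is_lambda_circulant n a l s :
  (s < n)%nat -> (forall t, (t < n)%nat -> 0 <= a t <= a s) -> 0 < a s ->
  is_lambda n (circulant n a) l -> l = a s.
Proof.
  intros Hs Ha Has [[c0 [Hc0 <-]] Hall]. apply Rle_antisym.
  - apply (cycle_gmean_circulant_le n); auto.
  - destruct (exists_cycle_circulant_gmean n a s Hs Has) as [c [Hc <-]]. auto.
Qed.

Section NormalizedCirculant.

Variables (n q s : nat) (b : nat -> R).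
Hypothesis s_lt_n : (s < n)%nat.
Hypothesis b_unit : forall x, (x < n)%nat -> 0 <= b x <= 1.
Hypothesis b_s : b s = 1.
Hypothesis q_large : (n - 1 <= q)%nat.

Local Notation P := (mpow n (circulant n b) (n * q)).

Let n_pos : (0 < n)%nat. Proof. lia. Qed.
Let b_nonneg x : (x < n)%nat -> 0 <= b x. Proof. apply b_unit. Qed.

Lemma mpow_circulant_le_1 i j : (i < n)%nat -> (j < n)%nat -> P i j <= 1.
Proof.
  intros Hi Hj.
  destruct (mpow_circulant_le_word_weight n b n_pos b_nonneg (n * q) i j Hi Hj)
    as [-> | [w [_ [Hw [_ Hle]]]]]; [lra |].
  pose proof (word_weight_bounds n b w b_unit Hw). lra.
Qed.

Lemma mpow_circulant_diag i : (i < n)%nat -> P i i = 1.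
Proof.
  intros Hi. apply Rle_antisym; [apply mpow_circulant_le_1; auto |].
  assert (Hw : letters_below n (repeat s (n * q))).
  { apply Forall_forall. intros x Hx. apply repeat_spec in Hx. lia. }
  pose proof (word_weight_le_mpow_circulant n b n_pos b_nonneg _ i Hw Hi) as H.
  rewrite repeat_length, word_weight_repeat, list_sum_repeat, b_s, pow1 in H.
  replace (i + n * q * s)%nat with (i + (q * s) * n)%nat in H by lia.
  rewrite Nat.Div0.mod_add, Nat.mod_small in H by lia. exact H.
Qed.

Lemma mpow_circulant_idempotent i j :
  (i < n)%nat -> (j < n)%nat -> mmul n P P i j = P i j.
Proof.
  intros Hi Hj. unfold mmul. apply Rle_antisym.
  - apply bigmax_lub; [apply mpow_nonneg |]. intros k Hk.
    pose proof (mpow_nonneg n (circulant n b) (n * q) i k) as Hik.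
    pose proof (mpow_nonneg n (circulant n b) (n * q) k j) as Hkj.
    destruct (mpow_circulant_le_word_weight n b n_pos b_nonneg (n * q) i k Hi Hk)
      as [-> | [w1 [Hl1 [Hw1 [Hs1 Hle1]]]]]; [rewrite Rmult_0_l; apply mpow_nonneg |].
    destruct (mpow_circulant_le_word_weight n b n_pos b_nonneg (n * q) k j Hk Hj)
      as [-> | [w2 [Hl2 [Hw2 [Hs2 Hle2]]]]]; [rewrite Rmult_0_r; apply mpow_nonneg |].
    destruct (word_shorten n b n_pos b_unit (n * q) q (w1 ++ w2))
      as [w [Hl [Hw [Hsum Hweight]]]].
    + apply Forall_app; auto.
    + nia.
    + rewrite length_app; lia.
    + pose proof (word_weight_le_mpow_circulant n b n_pos b_nonneg w i Hw Hi) as H.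
      rewrite Hl, <- Nat.Div0.add_mod_idemp_r, Hsum, Nat.Div0.add_mod_idemp_r, list_sum_app,
        Nat.add_assoc, <- Nat.Div0.add_mod_idemp_l, Hs1, Hs2 in H.
      rewrite word_weight_app in Hweight.
      eapply Rle_trans; [| exact H]. eapply Rle_trans; [| exact Hweight].
      apply Rmult_le_compat; auto.
  - eapply Rle_trans; [| apply (le_bigmax n _ j Hj)]; cbv beta.
    rewrite mpow_circulant_diag by auto. lra.
Qed.

End NormalizedCirculant.

Theorem lemma5 (n : nat) (a : nat -> R)
  (ha : forall t, (t < n)%nat -> 0 <= a t)
  (hnz : exists t, (t < n)%nat /\ a t <> 0)
  (l : R) (hl : is_lambda n (circulant n a) l) :
  let M := mpow n (mscale (/ l) (circulant n a)) (n ^ 2) in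
  (forall i j, (i < n)%nat -> (j < n)%nat -> mmul n M M i j = M i j) /\
  (forall i, (i < n)%nat -> M i i = 1) /\
  (forall i j, (i < n)%nat -> (j < n)%nat -> M i j = mstar n M i j).
Proof.
  destruct hnz as [t0 [Ht0 Hat0]].
  destruct (exists_argmax a n ltac:(lia)) as [s [Hs Hmax]].
  assert (Has : 0 < a s) by (specialize (Hmax t0 Ht0); specialize (ha t0 Ht0); lra).
  assert (Hl : l = a s)
    by (apply (is_lambda_circulant n a l s Hs); auto; intros t Ht; split; auto).
  set (b x := / l * a x).
  assert (Hb : forall x, (x < n)%nat -> 0 <= b x <= 1).
  { intros x Hx. unfold b. rewrite Hl. specialize (ha x Hx). specialize (Hmax x Hx).
    split; [apply Rmult_le_pos; [left; apply Rinv_0_lt_compat |]; auto |].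
    rewrite <- (Rinv_l (a s)) by lra. apply Rmult_le_compat_l; [left; apply Rinv_0_lt_compat |]; auto. }
  assert (Hbs : b s = 1) by (unfold b; rewrite Hl; apply Rinv_l; lra).
  intros M.
  assert (HM : M = mpow n (circulant n b) (n * n)) by (unfold M; f_equal; simpl; lia).
  clearbody M; subst M.
  assert (Hidem := mpow_circulant_idempotent n n s b Hs Hb Hbs ltac:(lia)).
  assert (Hdiag := mpow_circulant_diag n n s b Hs Hb Hbs ltac:(lia)).
  repeat split; auto.
  intros i j Hi Hj. apply idempotent_eq_mstar; auto. intros; apply mpow_nonneg.
Qed.
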